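(* Let $\mathbf{k}$ be a field. Every connected graded left counital $\mathbf{k}$-bialgebra $(H,m,\mu,\Delta,\varepsilon)$ is a left counital Hopf algebra, i.e. it admits a right antipode $S$ with $\mathrm{id}_H\ast S=\mu\varepsilon$. Such an $S$ is given by the recursion $S(1_H)=1_H$ and, for homogeneous $x\in H^{(n)}$, $n\ge1$, $S(x)=-\sum_{(x)}x'S(x'')$, where $\tilde\Delta(x)=\Delta(x)-1\otimes x=\sum_{(x)}x'\otimes x''$ (Sweedler notation), extended linearly.
   Context: All algebras are unital commutative over $\mathbf{k}$. A left counital bialgebra $(H,m,\mu,\Delta,\varepsilon)$ is an algebra $H$ with unit map $\mu$ and algebra homomorphisms $\Delta:H\to H\otimes H$ (coassociative) and $\varepsilon:H\to\mathbf{k}$ with $(\varepsilon\otimes\mathrm{id})\Delta=\beta_\ell$, $\beta_\ell(u)=1\otimes u$ (right counicity not required). It is graded if $H=\bigoplus_{n\ge0}H^{(n)}$ for submodules with $H^{(p)}H^{(q)}\subseteq H^{(p+q)}$ and $\Delta(H^{(n)})\subseteq (H^{(0)}\otimes H^{(n)})\oplus\bigoplus_{p+q=n,\,p,q>0}H^{(p)}\otimes H^{(q)}$ for all $n$; connected if moreover $H^{(0)}=\mathrm{im}\,\mu=\mathbf{k}1_H$ and $\ker\varepsilon=\bigoplus_{n\ge1}H^{(n)}$. The convolution of $f,g\in\mathrm{End}_{\mathbf{k}}(H)$ is $f\ast g=m(f\otimes g)\Delta$. A right antipode is a linear $S:H\to H$ with $\mathrm{id}_H\ast S=\mu\varepsilon$;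 a left counital bialgebra with a right antipode is called a left counital (right antipode) Hopf algebra. *)

From HB Require Import structures.
From mathcomp Require Import all_boot all_order all_algebra.
Set Implicit Arguments. Unset Strict Implicit. Unset Printing Implicit Defensive.
Import Order.TTheory GRing.Theory Num.Theory.
Local Open Scope ring_scope.

Definition lin (k : fieldType) (U V : lmodType k) (f : U -> V) : Prop :=
  forall (a : k) (x y : U), f (a *: x + y) = a *: f x + f y.

Definition bilin (k : fieldType) (U V W : lmodType k) (f : U -> V -> W) : Prop :=
  (forall y, lin (fun x => f x y)) /\ (forall x, lin (f x)).

Definition trilin (k : fieldType) (U V X W : lmodType k) (f : U -> V -> X -> W) : Prop :=
  [/\ (forall y z, lin (fun x => f x y z)),
      (forall x z, lin (fun y => f x y z)) &
      (forall x y, lin (f x y))].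

Record tensor2 (k : fieldType) (H : lmodType k) := Tensor2 {
  t2_car :> lmodType k;
  t2_tens : H -> H -> t2_car;
  t2_lift : forall W : lmodType k, (H -> H -> W) -> t2_car -> W;
  t2_tens_bilin : bilin t2_tens;
  t2_lift_lin : forall (W : lmodType k) (f : H -> H -> W), bilin f -> lin (t2_lift f);
  t2_lift_tens : forall (W : lmodType k) (f : H -> H -> W), bilin f ->
    forall a b, t2_lift f (t2_tens a b) = f a b;
  t2_lift_uniq : forall (W : lmodType k) (f : H -> H -> W) (g : t2_car -> W), bilin f -> lin g ->
    (forall a b, g (t2_tens a b) = f a b) -> forall t, g t = t2_lift f t
}.

Record tensor3 (k : fieldType) (H : lmodType k) := Tensor3 {
  t3_car :> lmodType k;
  t3_tens : H -> H -> H -> t3_car;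
  t3_lift : forall W : lmodType k, (H -> H -> H -> W) -> t3_car -> W;
  t3_tens_trilin : trilin t3_tens;
  t3_lift_lin : forall (W : lmodType k) (f : H -> H -> H -> W), trilin f -> lin (t3_lift f);
  t3_lift_tens : forall (W : lmodType k) (f : H -> H -> H -> W), trilin f ->
    forall a b c, t3_lift f (t3_tens a b c) = f a b c;
  t3_lift_uniq : forall (W : lmodType k) (f : H -> H -> H -> W) (g : t3_car -> W), trilin f -> lin g ->
    (forall a b c, g (t3_tens a b c) = f a b c) -> forall t, g t = t3_lift f t
}.

Section Bialg.
Variables (k : fieldType) (H : comAlgType k).

Definition tmul (T : tensor2 H) (t u : T) : T :=
  t2_lift (fun a b => t2_lift (fun c d => t2_tens T (a * c) (b * d)) u) t.

Definition conv (T : tensor2 H) (Delta : H -> T) (f g : H -> H) (x : H) : H :=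
  t2_lift (fun a b => f a * g b) (Delta x).

Definition coassoc (T : tensor2 H) (T3 : tensor3 H) (Delta : H -> T) : Prop :=
  forall x,
    t2_lift (fun a b => t2_lift (fun y z => t3_tens T3 y z b) (Delta a)) (Delta x)
  = t2_lift (fun a b => t2_lift (fun y z => t3_tens T3 a y z) (Delta b)) (Delta x).

(* left counital bialgebra (H, m, mu, Delta, eps); mu c = c%:A; k (x) H == H via c (x) u |-> c *: u *)
Definition left_counital_bialgebra (T : tensor2 H) (T3 : tensor3 H)
    (Delta : H -> T) (eps : H -> k) : Prop :=
  [/\ lin Delta,
      (forall x y, Delta (x * y) = tmul (Delta x) (Delta y)),
      Delta 1 = t2_tens T 1 1,
      coassoc T3 Delta &
      [/\ (forall (a : k) x y, eps (a *: x + y) = a * eps x + eps y),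
      (forall x y, eps (x * y) = eps x * eps y),
      eps 1 = 1 &
      (forall u, t2_lift (fun a b => eps a *: b) (Delta u) = u)]].

Definition graded (T : tensor2 H) (Delta : H -> T) (Hn : nat -> {pred H}) : Prop :=
  [/\ (forall n, 0 \in Hn n /\
         forall (a : k) x y, x \in Hn n -> y \in Hn n -> a *: x + y \in Hn n),
      (forall x, exists N (xs : nat -> H),
          (forall i, xs i \in Hn i) /\ x = \sum_(i < N) xs i),
      (forall N (xs : nat -> H), (forall i, xs i \in Hn i) ->
          \sum_(i < N) xs i = 0 -> forall i, (i < N)%N -> xs i = 0),
      (forall p q x y, x \in Hn p -> y \in Hn q -> x * y \in Hn (p + q)%N) &
      (forall n x, x \in Hn n -> exists s : seq (H * H),
          Delta x = \sum_(ab <- s) t2_tens T ab.1 ab.2 /\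
          forall ab, ab \in s ->
            (ab.1 \in Hn 0%N /\ ab.2 \in Hn n) \/
            exists p q, [/\ (0 < p)%N, (0 < q)%N, (p + q)%N = n,
                            ab.1 \in Hn p & ab.2 \in Hn q])].

Definition connected_graded (T : tensor2 H) (Delta : H -> T) (eps : H -> k)
    (Hn : nat -> {pred H}) : Prop :=
  [/\ graded Delta Hn,
      (forall x, x \in Hn 0%N <-> exists c : k, x = c%:A) &
      (forall x, eps x = 0 <-> exists N (xs : nat -> H),
          (forall i, xs i \in Hn i.+1) /\ x = \sum_(i < N) xs i)].

End Bialg.

From HB Require Import structures.
From mathcomp Require Import all_boot all_order all_algebra.
From Stdlib Require Import IndefiniteDescription.
Import GRing.Theory.
Local Open Scope ring_scope.
Set Implicit Arguments. Unset Strict Implicit.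

(* For [x] of degree [n > 0], left counitality forces the part of [Delta x]
   lying in [H^(0) (x) H^(n)] to be [1 (x) x], so the reduced coproduct
   [Delta x - 1 (x) x] only has right tensor factors of degree [< n].  Hence
   [S x = - sum x' S(x'')] is a recursion on the degree, and [S] extends
   linearly through the homogeneous components.  Then
   [(id * S)(x) = S x + sum x' S(x'') = 0 = eps x] in positive degree, and
   [(id * S)(c 1) = c] in degree [0]. *)

Section LinearMaps.
Variables (k : fieldType) (U V : lmodType k) (f : U -> V).
Hypothesis f_lin : lin f.

Lemma lin0 : f 0 = 0.
Proof.
have := f_lin 1 0 0; rewrite !scale1r addr0 => E.
by apply/(addrI (f 0)); rewrite addr0 -E.
Qed.

Lemma linD x y : f (x + y) = f x + f y.
Proof. by have := f_lin 1 x y; rewrite !scale1r. Qed.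

Lemma linZ a x : f (a *: x) = a *: f x.
Proof. by have := f_lin a x 0; rewrite !addr0 lin0 addr0. Qed.

Lemma lin_sum (I : Type) (r : seq I) (P : pred I) (F : I -> U) :
  f (\sum_(i <- r | P i) F i) = \sum_(i <- r | P i) f (F i).
Proof. exact: (big_morph f linD lin0). Qed.

End LinearMaps.

Section Tensors.
Variables (k : fieldType) (H : lmodType k) (T : tensor2 H).

Lemma t2_tens_linl b : lin (fun a => t2_tens T a b).
Proof. by case: (t2_tens_bilin T) => h _; exact: h. Qed.

Lemma t2_tens_linr a : lin (t2_tens T a).
Proof. by case: (t2_tens_bilin T) => _ h; exact: h. Qed.

Lemma t2_lift_sum (W : lmodType k) (f : H -> H -> W) (s : seq (H * H)) :
  bilin f -> t2_lift f (\sum_(ab <- s) t2_tens T ab.1 ab.2) = \sum_(ab <- s) f ab.1 ab.2.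
Proof.
move=> f_bilin; rewrite (lin_sum (t2_lift_lin f_bilin)).
by apply: eq_bigr => ab _; rewrite t2_lift_tens.
Qed.

End Tensors.

Lemma bilin_mul_mapr (k : fieldType) (H : comAlgType k) (S : H -> H) :
  lin S -> bilin (fun a b : H => a * S b).
Proof.
move=> S_lin; split.
- by move=> y a x z; rewrite mulrDl scalerAl.
- by move=> x a y z; rewrite S_lin mulrDr scalerAr.
Qed.


Lemma sumr_ord_widen (V : zmodType) (F : nat -> V) N K : (N <= K)%N ->
  (forall i, (N <= i)%N -> F i = 0) -> \sum_(i < K) F i = \sum_(i < N) F i.
Proof.
move=> NK FN; rewrite -!(big_mkord xpredT) (big_cat_nat (leq0n N) NK) /=.
rewrite [X in _ + X]big1_seq ?addr0 // => i /andP[_].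
by rewrite mem_index_iota => /andP[Ni _]; exact: FN.
Qed.

Section HomogeneousComponents.
Variables (k : fieldType) (V : lmodType k) (Hn : nat -> {pred V}).
Hypothesis Hn_closed : forall n, 0 \in Hn n /\
  forall (a : k) x y, x \in Hn n -> y \in Hn n -> a *: x + y \in Hn n.
Hypothesis Hn_span : forall x, exists N (xs : nat -> V),
  (forall i, xs i \in Hn i) /\ x = \sum_(i < N) xs i.
Hypothesis Hn_indep : forall N (xs : nat -> V), (forall i, xs i \in Hn i) ->
  \sum_(i < N) xs i = 0 -> forall i, (i < N)%N -> xs i = 0.

Definition homog_decomp (x : V) (F : nat -> V) (N : nat) : Prop :=
  [/\ forall i, F i \in Hn i, forall i, (N <= i)%N -> F i = 0
    & x = \sum_(i < N) F i].

Lemma homog_decomp_uniq x F N G M :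
  homog_decomp x F N -> homog_decomp x G M -> F =1 G.
Proof.
move=> [FH FN ->] [GH GM xE] i.
have FGH j : F j - G j \in Hn j by rewrite -scaleN1r addrC; apply: (Hn_closed j).2.
have FG0 : \sum_(j < maxn N M) (F j - G j) = 0.
  rewrite sumrB (sumr_ord_widen (leq_maxl N M) FN) (sumr_ord_widen (leq_maxr N M) GM).
  by rewrite xE subrr.
case: (ltnP i (maxn N M)) => [iNM | NMi].
  by apply/eqP; rewrite -subr_eq0; apply/eqP; exact: (Hn_indep FGH FG0).
by rewrite FN ?GM // (leq_trans _ NMi) ?leq_maxl ?leq_maxr.
Qed.

Lemma homog_decomp_exists x : exists FN : (nat -> V) * nat, homog_decomp x FN.1 FN.2.
Proof.
have [N [xs [xsH ->]]] := Hn_span x.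
exists ((fun i => if (i < N)%N then xs i else 0), N); split => /=.
- by move=> i; case: ifP => _ //; exact: (Hn_closed i).1.
- by move=> i Ni; rewrite ltnNge Ni.
- by apply: eq_bigr => i _; rewrite ltn_ord.
Qed.

Definition homog_decomp_of x : (nat -> V) * nat :=
  proj1_sig (constructive_indefinite_description _ (homog_decomp_exists x)).

Definition hcomp (i : nat) (x : V) : V := (homog_decomp_of x).1 i.

Definition hbound (x : V) : nat := (homog_decomp_of x).2.

Lemma homog_decomp_hcomp x : homog_decomp x (hcomp^~ x) (hbound x).
Proof. exact: (proj2_sig (constructive_indefinite_description _ (homog_decomp_exists x))). Qed.

Lemma hcompP i x : hcomp i x \in Hn i.
Proof. by case: (homog_decomp_hcomp x). Qed.

Lemma hcomp_ge_hbound x i : (hbound x <= i)%N -> hcomp i x = 0.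
Proof. by case: (homog_decomp_hcomp x) => _ h _; exact: h. Qed.

Lemma hcomp_sum x : x = \sum_(i < hbound x) hcomp i x.
Proof. by case: (homog_decomp_hcomp x). Qed.

Lemma hcomp_lin i : lin (hcomp i).
Proof.
move=> a x y; set M := maxn (hbound x) (hbound y).
have [xH xN xE] := homog_decomp_hcomp x; have [yH yN yE] := homog_decomp_hcomp y.
have D : homog_decomp (a *: x + y) (fun j => a *: hcomp j x + hcomp j y) M.
  split.
  - by move=> j; apply: (Hn_closed j).2.
  - move=> j Mj; rewrite xN ?yN ?scaler0 ?addr0 // (leq_trans _ Mj) ?leq_maxl ?leq_maxr //.
  - rewrite big_split /= -scaler_sumr (sumr_ord_widen (leq_maxl _ _) xN).
    by rewrite (sumr_ord_widen (leq_maxr _ _) yN) -xE -yE.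
exact: homog_decomp_uniq (homog_decomp_hcomp _) D i.
Qed.

Lemma hcomp_homog n x : x \in Hn n -> forall i, hcomp i x = if i == n then x else 0.
Proof.
move=> xH i.
have D : homog_decomp x (fun j => if j == n then x else 0) n.+1.
  split.
  - by move=> j; case: eqP => [->|_] //; exact: (Hn_closed j).1.
  - by move=> j nj; rewrite (gtn_eqF nj).
  - by rewrite -big_mkcond big_ord1_eq ltnSn.
exact: homog_decomp_uniq (homog_decomp_hcomp x) D i.
Qed.

End HomogeneousComponents.

Section TruncatedAntipode.
Variables (k : fieldType) (H : comAlgType k) (T : tensor2 H) (Hn : nat -> {pred H}).
Hypothesis Hn_closed : forall n, 0 \in Hn n /\
  forall (a : k) x y, x \in Hn n -> y \in Hn n -> a *: x + y \in Hn n.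
Hypothesis Hn_span : forall x, exists N (xs : nat -> H),
  (forall i, xs i \in Hn i) /\ x = \sum_(i < N) xs i.
Hypothesis Hn_indep : forall N (xs : nat -> H), (forall i, xs i \in Hn i) ->
  \sum_(i < N) xs i = 0 -> forall i, (i < N)%N -> xs i = 0.
Variable L : H -> T.
Hypothesis L_lin : lin L.

Local Notation pi := (hcomp Hn_closed Hn_span).
Local Notation bound := (hbound Hn_closed Hn_span).
Local Notation pi_lin := (hcomp_lin Hn_closed Hn_span Hn_indep).
Local Notation pi_homog := (hcomp_homog Hn_closed Hn_span Hn_indep).

(* [antipode_upto n] solves the antipode recursion on degrees [<= n] and
   vanishes on degrees [> n]. *)
Fixpoint antipode_upto (n : nat) : H -> H :=
  if n is n'.+1 then
    fun x => antipode_upto n' x - t2_lift (fun a b => a * antipode_upto n' b) (L (pi n x))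
  else pi 0.

Lemma antipode_upto_lin n : lin (antipode_upto n).
Proof.
elim: n => [|n IH] /=; first exact: pi_lin.
move=> a x y; rewrite (pi_lin n.+1) L_lin (t2_lift_lin (bilin_mul_mapr IH)) IH.
by rewrite scalerBr opprD addrACA.
Qed.

Lemma antipode_uptoS_eq n x : pi n.+1 x = 0 -> antipode_upto n.+1 x = antipode_upto n x.
Proof.
move=> /= ->; rewrite (lin0 L_lin).
by rewrite (lin0 (t2_lift_lin (bilin_mul_mapr (antipode_upto_lin n)))) subr0.
Qed.

Lemma antipode_upto_stable x m : (forall i, (m < i)%N -> pi i x = 0) ->
  forall n, (m <= n)%N -> antipode_upto n x = antipode_upto m x.
Proof.
move=> xm; elim=> [|n IH]; first by rewrite leqn0 => /eqP->.
rewrite leq_eqVlt => /orP[/eqP-> // | mn].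
by rewrite antipode_uptoS_eq ?xm // IH.
Qed.

Lemma antipode_upto_low q x : x \in Hn q -> forall n, (n < q)%N -> antipode_upto n x = 0.
Proof.
move=> xH; elim=> [|n IH] nq; first by rewrite /= (pi_homog xH) (ltn_eqF nq).
by rewrite antipode_uptoS_eq ?IH ?(ltnW nq) // (pi_homog xH) (ltn_eqF nq).
Qed.

Definition antipode (x : H) : H := antipode_upto (bound x) x.

Lemma antipode_eq_upto x m : (forall i, (m < i)%N -> pi i x = 0) ->
  antipode x = antipode_upto m x.
Proof.
move=> xm; set b := bound x.
have xb i : (b < i)%N -> pi i x = 0 by move/ltnW; exact: hcomp_ge_hbound.
by rewrite /antipode -(antipode_upto_stable xm (leq_maxl m b))
  (antipode_upto_stable xb (leq_maxr m b)).
Qed.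

Lemma antipode_homog q x : x \in Hn q -> antipode x = antipode_upto q x.
Proof.
by move=> xH; apply: antipode_eq_upto => i qi; rewrite (pi_homog xH) (gtn_eqF qi).
Qed.

Lemma antipode_homog0 x : x \in Hn 0 -> antipode x = x.
Proof. by move=> xH; rewrite (antipode_homog xH) /= (pi_homog xH). Qed.

Lemma antipode_lin : lin antipode.
Proof.
move=> a x y; set M := maxn (bound x) (bound y).
have vanish z : (bound z <= M)%N -> forall i, (M < i)%N -> pi i z = 0.
  by move=> zM i Mi; apply: hcomp_ge_hbound; exact: leq_trans zM (ltnW Mi).
have vx := vanish x (leq_maxl _ _); have vy := vanish y (leq_maxr _ _).
rewrite (antipode_eq_upto vx) (antipode_eq_upto vy) (antipode_eq_upto (m := M)).
  exact: antipode_upto_lin.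
by move=> i Mi; rewrite pi_lin vx ?vy ?scaler0 ?addr0.
Qed.

Lemma antipode_recursion n x : x \in Hn n.+1 ->
  (exists s : seq (H * H), L x = \sum_(ab <- s) t2_tens T ab.1 ab.2 /\
     forall ab, ab \in s -> exists2 q, (q <= n)%N & ab.2 \in Hn q) ->
  antipode x = - t2_lift (fun a b => a * antipode b) (L x).
Proof.
move=> xH [s [Ls sH]].
have Sn_bilin := bilin_mul_mapr (antipode_upto_lin n).
have S_bilin := bilin_mul_mapr antipode_lin.
rewrite (antipode_homog xH) /= (antipode_upto_low xH) ?ltnSn //.
rewrite (pi_homog xH) eqxx sub0r Ls !t2_lift_sum //.
congr (- _); apply: eq_big_seq => ab /sH [q qn abH].
rewrite (antipode_homog abH) (antipode_upto_stable _ qn) // => i qi.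
by rewrite (pi_homog abH) (gtn_eqF qi).
Qed.

End TruncatedAntipode.

Section ConnectedGradedBialgebra.
Variables (k : fieldType) (H : comAlgType k) (T : tensor2 H).
Variables (Delta : H -> T) (eps : H -> k) (Hn : nat -> {pred H}).
Hypothesis Delta_lin : lin Delta.
Hypothesis Delta1 : Delta 1 = t2_tens T 1 1.
Hypothesis eps_lin : forall (a : k) x y, eps (a *: x + y) = a * eps x + eps y.
Hypothesis eps1 : eps 1 = 1.
Hypothesis counitl : forall u, t2_lift (fun a b => eps a *: b) (Delta u) = u.
Hypothesis Hn_closed : forall n, 0 \in Hn n /\
  forall (a : k) x y, x \in Hn n -> y \in Hn n -> a *: x + y \in Hn n.
Hypothesis Hn_span : forall x, exists N (xs : nat -> H),
  (forall i, xs i \in Hn i) /\ x = \sum_(i < N) xs i.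
Hypothesis Hn_indep : forall N (xs : nat -> H), (forall i, xs i \in Hn i) ->
  \sum_(i < N) xs i = 0 -> forall i, (i < N)%N -> xs i = 0.
Hypothesis Delta_graded : forall n x, x \in Hn n -> exists s : seq (H * H),
  Delta x = \sum_(ab <- s) t2_tens T ab.1 ab.2 /\
  forall ab, ab \in s ->
    (ab.1 \in Hn 0%N /\ ab.2 \in Hn n) \/
    exists p q, [/\ (0 < p)%N, (0 < q)%N, (p + q)%N = n, ab.1 \in Hn p & ab.2 \in Hn q].
Hypothesis Hn0 : forall x, x \in Hn 0%N <-> exists c : k, x = c%:A.
Hypothesis ker_eps : forall x, eps x = 0 <-> exists N (xs : nat -> H),
  (forall i, xs i \in Hn i.+1) /\ x = \sum_(i < N) xs i.

Lemma eps_scalar c : eps c%:A = c.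
Proof.
have eps0 : eps 0 = 0.
  by have := eps_lin 1 0 0; rewrite scale1r addr0 mul1r -[LHS]addr0 => /addrI.
by have := eps_lin c 1 0; rewrite addr0 eps1 eps0 mulr1 addr0.
Qed.

Lemma eps_homog_pos n x : (0 < n)%N -> x \in Hn n -> eps x = 0.
Proof.
case: n => [//|n] _ xH; apply/ker_eps; exists n.+1, (fun i => if i == n then x else 0).
split; last by rewrite -big_mkcond big_ord1_eq ltnSn.
by move=> i; case: eqP => [->//|_]; exact: (Hn_closed _).1.
Qed.

Definition reduced_coproduct (x : H) : T := Delta x - t2_tens T 1 x.

Lemma reduced_coproduct_lin : lin reduced_coproduct.
Proof.
by move=> a x y; rewrite /reduced_coproduct Delta_lin t2_tens_linr scalerBr opprD addrACA.
Qed.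

Lemma reduced_coproduct_lower n x : x \in Hn n.+1 -> exists s : seq (H * H),
  reduced_coproduct x = \sum_(ab <- s) t2_tens T ab.1 ab.2 /\
  forall ab, ab \in s -> exists2 q, (q <= n)%N & ab.2 \in Hn q.
Proof.
move=> xH; have [s [Ds sH]] := Delta_graded xH.
pose P (ab : H * H) := (ab.1 \in Hn 0) && (ab.2 \in Hn n.+1).
have mixed ab : ab \in s -> ~~ P ab -> exists p q, [/\ (0 < p)%N, (0 < q)%N,
    (p + q)%N = n.+1, ab.1 \in Hn p & ab.2 \in Hn q].
  by move=> /sH [[ab1 ab2]|//]; rewrite /P ab1 ab2.
have eps_bilin : bilin (fun a b : H => eps a *: b).
  split=> [y a x' z | x' a y z]; first by rewrite eps_lin scalerDl scalerA.
  by rewrite scalerDr !scalerA mulrC.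
(* Counitality applied to [Delta x]: the mixed terms are killed by [eps]. *)
have xE : x = \sum_(ab <- s | P ab) eps ab.1 *: ab.2.
  rewrite -{1}(counitl x) Ds t2_lift_sum // (bigID P) /= [X in _ + X]big1_seq ?addr0 //.
  move=> ab /andP[nP abs]; have [p [q [p0 _ _ ab1 _]]] := mixed ab abs nP.
  by rewrite (eps_homog_pos p0 ab1) scale0r.
have deg0_part : \sum_(ab <- s | P ab) t2_tens T ab.1 ab.2 = t2_tens T 1 x.
  rewrite xE (lin_sum (t2_tens_linr T 1)); apply: eq_bigr => ab /andP[ab1 _].
  have [c ->] := (Hn0 _).1 ab1.
  by rewrite eps_scalar (linZ (t2_tens_linl T _)) (linZ (t2_tens_linr T _)).
exists [seq ab <- s | ~~ P ab]; split.
  rewrite big_filter /reduced_coproduct Ds (bigID P) /= deg0_part.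
  by rewrite addrAC subrr add0r.
move=> ab; rewrite mem_filter => /andP[nP abs].
have [p [q [p0 _ pq _ ab2]]] := mixed ab abs nP.
by exists q; rewrite // -ltnS -pq -{1}(add0n q) ltn_add2r.
Qed.

Definition right_antipode : H -> H := antipode Hn_closed Hn_span reduced_coproduct.

Lemma right_antipode_lin : lin right_antipode.
Proof. by have := antipode_lin Hn_closed Hn_span Hn_indep reduced_coproduct_lin. Qed.

Lemma right_antipode1 : right_antipode 1 = 1.
Proof.
have one_deg0 : (1 : H) \in Hn 0 by apply/Hn0; exists 1; rewrite scale1r.
exact (antipode_homog0 Hn_closed Hn_span Hn_indep reduced_coproduct_lin one_deg0).
Qed.

Lemma right_antipode_recursion n x : (0 < n)%N -> x \in Hn n ->
  right_antipode x = - t2_lift (fun a b => a * right_antipode b) (reduced_coproduct x).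
Proof.
case: n => [//|n] _ xH.
by have := antipode_recursion Hn_closed Hn_span Hn_indep reduced_coproduct_lin xH; apply;
  exact: reduced_coproduct_lower.
Qed.

Lemma conv_id_right_antipode_homog n x : x \in Hn n ->
  conv Delta id right_antipode x = (eps x)%:A.
Proof.
have S_bilin := bilin_mul_mapr right_antipode_lin.
case: n => [|n] xH.
  have [c ->] := (Hn0 x).1 xH.
  rewrite /conv (linZ Delta_lin) Delta1 (linZ (t2_lift_lin S_bilin)) t2_lift_tens //.
  by rewrite right_antipode1 mulr1 eps_scalar.
rewrite /conv -(subrK (t2_tens T 1 x) (Delta x)) (linD (t2_lift_lin S_bilin)) t2_lift_tens //.
by rewrite (right_antipode_recursion _ xH) // (eps_homog_pos _ xH) // scale0r mul1r subrr.
Qed.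

Lemma conv_id_right_antipode x : conv Delta id right_antipode x = (eps x)%:A.
Proof.
have conv_lin : lin (conv Delta id right_antipode).
  move=> a y z; rewrite /conv Delta_lin.
  by have := t2_lift_lin (bilin_mul_mapr right_antipode_lin); apply.
have eps_alg_lin : lin (fun y => (eps y)%:A : H).
  by move=> a y z; rewrite eps_lin scalerDl scalerA.
rewrite (hcomp_sum Hn_closed Hn_span x) (lin_sum conv_lin) (lin_sum eps_alg_lin).
by apply: eq_bigr => i _; exact: conv_id_right_antipode_homog (hcompP _ _ i x).
Qed.

End ConnectedGradedBialgebra.

Unset Implicit Arguments.

Theorem theorem4p6 (k : fieldType) (H : comAlgType k)
  (T : tensor2 H) (T3 : tensor3 H) (Delta : H -> T) (eps : H -> k)
  (Hn : nat -> {pred H}) :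
  left_counital_bialgebra T3 Delta eps ->
  connected_graded Delta eps Hn ->
  exists S : H -> H,
    [/\ lin S,
        (forall x, conv Delta id S x = (eps x)%:A),
        S 1 = 1 &
        (forall n x, (0 < n)%N -> x \in Hn n ->
           S x = - t2_lift (fun a b => a * S b) (Delta x - t2_tens T 1 x))].
Proof.
move=> [Delta_lin _ Delta1 _ [eps_lin _ eps1 counitl]].
move=> [[Hn_closed Hn_span Hn_indep _ Delta_graded] Hn0 ker_eps].
exists (right_antipode Delta Hn_closed Hn_span); split.
- exact: right_antipode_lin Delta_lin Hn_closed Hn_span Hn_indep.
- exact: conv_id_right_antipode Delta_lin Delta1 eps_lin eps1 counitl
    Hn_closed Hn_span Hn_indep Delta_graded Hn0 ker_eps.
- exact: right_antipode1 Delta_lin Hn_closed Hn_span Hn_indep Hn0.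
- exact: right_antipode_recursion Delta_lin eps_lin eps1 counitl
    Hn_closed Hn_span Hn_indep Delta_graded Hn0 ker_eps.
Qed.
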